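(* Let $x_1,x_2,\ldots$ be a sequence of complex numbers and let $y_1,y_2,\ldots$ be its invert transform. Then for all integers $1\le k\le n$, \[k!\,B_{n,k}(y_1,2!\cdot y_2,3!\cdot y_3,\ldots)=\sum_{i=k}^n\binom{i-1}{k-1}\,i!\,B_{n,i}(x_1,2!\cdot x_2,3!\cdot x_3,\ldots).\]
   Context: The invert transform $(y_n)_{n\ge1}$ of $(x_n)_{n\ge1}$ is defined by $y_n=x_n+\sum_{i=1}^{n-1}x_i\,y_{n-i}$ for $n\ge1$, equivalently $1+\sum_{n\ge1}y_nt^n=\bigl(1-\sum_{n\ge1}x_nt^n\bigr)^{-1}$. The partial Bell polynomial is $B_{n,k}(z_1,z_2,\ldots)=\sum \frac{n!}{j_1!j_2!\cdots}\prod_{i\ge1}\left(\frac{z_i}{i!}\right)^{j_i}$, the sum over nonnegative integers $j_1,j_2,\ldots$ with $\sum_i j_i=k$ and $\sum_i i\,j_i=n$. *)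

From HB Require Import structures.
From mathcomp Require Import all_boot all_order all_algebra.
From mathcomp Require Import reals Rstruct.
From mathcomp.real_closed Require Import complex.
Set Implicit Arguments. Unset Strict Implicit. Unset Printing Implicit Defensive.
Import Order.TTheory GRing.Theory Num.Theory.
Local Open Scope ring_scope.

Definition C : Type := complex Rdefinitions.R.

(* Sequences (x_n)_{n>=1} are functions nat -> C; the value at 0 is unused. *)

Definition invert_transform (x y : nat -> C) : Prop :=
  forall n : nat, (1 <= n)%N ->
    y n = x n + \sum_(1 <= i < n) x i * y (n - i)%N.

(* A multiplicity vector
   (j_1, j_2, ...) is encoded as j : {ffun 'I_n -> 'I_n.+1}, where j i is the
   multiplicity j_{i+1} of the part size i+1.  Since sum_i i j_i = n forces
   j_i = 0 for i > n and j_i <= n, this enumerates exactly the index set. *)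
Definition bell_partial (n k : nat) (z : nat -> C) : C :=
  \sum_(j : {ffun 'I_n -> 'I_n.+1} |
        ((\sum_(i < n) (j i : nat))%N == k) &&
        ((\sum_(i < n) i.+1 * j i)%N == n))
    (n`!)%:R / (\prod_(i < n) ((j i)`!)%:R)
      * \prod_(i < n) (z i.+1 / (i.+1)`!%:R) ^+ (j i).

From HB Require Import structures.
From mathcomp Require Import all_boot all_order all_algebra.
From mathcomp Require Import reals Rstruct.
From mathcomp.real_closed Require Import complex.
From mathcomp Require Import ring zify.
Set Implicit Arguments.
Unset Strict Implicit.
Unset Printing Implicit Defensive.

Import Order.TTheory GRing.Theory Num.Theory.
Local Open Scope ring_scope.

(* Partial Bell polynomials are coefficients of powers of a generating function:
   by the multinomial theorem, k! B_{n,k}(1! z_1, 2! z_2, ...) = n! [t^n] Z(t)^k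
   with Z(t) = sum_i z_i t^i.  For the generating functions X and Y of x and y the
   invert transform reads Y = X + X Y, i.e. Y = X / (1 - X), hence
   Y^k = X^k (1 - X)^(-k) = sum_(i >= k) C(i-1, k-1) X^i, and the theorem compares
   n-th coefficients.  Power series are replaced by polynomials truncated at degree n
   and their identities by congruences modulo t^(n+1), i.e. divisibility by 'X^(n+1);
   when P(0) = 0, a congruence A = B + P A determines A. *)

Definition fcons (T : finType) m (t : T) (g : {ffun 'I_m -> T}) :
    {ffun 'I_m.+1 -> T} :=
  [ffun i => if unlift ord0 i is Some i' then g i' else t].

Lemma fcons0 (T : finType) m t (g : {ffun 'I_m -> T}) : fcons t g ord0 = t.
Proof. by rewrite ffunE unlift_none. Qed.

Lemma fconsS (T : finType) m t (g : {ffun 'I_m -> T}) i :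
  fcons t g (lift ord0 i) = g i.
Proof. by rewrite ffunE liftK. Qed.

Lemma big_ffun_cons (R : Type) (idx : R) (op : Monoid.com_law idx)
    (T : finType) m (F : {ffun 'I_m.+1 -> T} -> R) :
  \big[op/idx]_f F f
  = \big[op/idx]_(t : T) \big[op/idx]_(g : {ffun 'I_m -> T}) F (fcons t g).
Proof.
rewrite pair_big (reindex (fun p : T * {ffun 'I_m -> T} => fcons p.1 p.2)) //.
apply: onW_bij.
exists (fun f : {ffun 'I_m.+1 -> T} => (f ord0, [ffun i => f (lift ord0 i)])).
  move=> [t g] /=; rewrite fcons0; congr (_, _); apply/ffunP => i.
  by rewrite ffunE fconsS.
move=> f; apply/ffunP => i; rewrite ffunE.
by case: unliftP => [j ->|->]; rewrite ?ffunE.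
Qed.

Lemma natr_fact_neq0 (F : numDomainType) n : n`!%:R != 0 :> F.
Proof. by rewrite pnatr_eq0 -lt0n fact_gt0. Qed.

Section Multinomial.

Context {F : numFieldType} {A : comAlgType F}.

Definition multinomial_expansion m b k (a : nat -> A) : A :=
  \sum_(j : {ffun 'I_m -> 'I_b} | (\sum_(i < m) j i)%N == k)
     (\prod_(i < m) (j i)`!%:R : F)^-1 *: \prod_(i < m) a i ^+ j i.

Lemma multinomial_expansion_recl m b k a :
  multinomial_expansion m.+1 b k a =
  \sum_(t < b | (t <= k)%N)
     (t`!%:R : F)^-1 *: (a 0%N ^+ t * multinomial_expansion m b (k - t)%N (a \o succn)).
Proof.
rewrite /multinomial_expansion big_mkcond big_ffun_cons [RHS]big_mkcond /=.
apply: eq_bigr => t _; case: leqP => [tk|kt]; last first.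
  rewrite big1 // => g _; case: eqP => // ek.
  by move: kt; rewrite -ek big_ord_recl fcons0 ltnNge leq_addr.
rewrite mulr_sumr scaler_sumr [RHS]big_mkcond; apply: eq_bigr => g _ /=.
rewrite !big_ord_recl !fcons0.
rewrite (eq_bigr (fun i => g i : nat)) => [|i _]; last by rewrite fconsS.
rewrite (eq_bigr (fun i => (g i)`!%:R : F)) => [|i _]; last by rewrite fconsS.
rewrite (eq_bigr (fun i : 'I_m => a i.+1 ^+ g i)) => [|i _]; last by rewrite fconsS.
rewrite -[X in _ == X](subnKC tk) eqn_add2l.
by case: eqP; rewrite ?scaler0 ?mulr0 // invfM -scalerA scalerAr.
Qed.

Lemma multinomial m b k (a : nat -> A) : (k < b)%N ->
  (\sum_(i < m) a i) ^+ k = k`!%:R *: multinomial_expansion m b k a.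
Proof.
elim: m k a => [|m IH] k a kb.
  rewrite big_ord0 /multinomial_expansion.
  rewrite (eq_bigl (fun=> 0%N == k)) => [|j]; last by rewrite big_ord0.
  under eq_bigr do rewrite !big_ord0 invr1 scale1r.
  case: k {kb} => [|k]; last by rewrite big_pred0 // scaler0 expr0n.
  by rewrite sumr_const card_ffun !card_ord expr0 scale1r.
rewrite big_ord_recl addrC exprDn multinomial_expansion_recl.
pose S := \sum_(i < m) (a \o succn) i.
rewrite (big_ord_widen b (fun t => S ^+ (k - t) * a 0%N ^+ t *+ 'C(k, t)) kb).
rewrite scaler_sumr; apply: eq_big => // t; rewrite ltnS => tk.
have ktb : (k - t < b)%N by apply: leq_ltn_trans (leq_subr t k) kb.
rewrite (IH _ (a \o succn) ktb) -scalerAl mulrC -scaler_nat scalerA scalerA.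
congr (_ *: _); rewrite -(bin_fact tk) !natrM.
have := natr_fact_neq0 F t; have := natr_fact_neq0 F (k - t).
by move=> *; field.
Qed.

End Multinomial.

Definition gen_poly (R : nzRingType) (z : nat -> R) n : {poly R} :=
  \sum_(i < n) z i.+1 *: 'X^(i.+1).

Lemma prod_expr_scale_monomial (R : comNzRingType) n (c : 'I_n -> R)
    (d e : 'I_n -> nat) :
  \prod_(i < n) (c i *: 'X^(d i)) ^+ e i
  = (\prod_(i < n) c i ^+ e i) *: 'X^(\sum_(i < n) d i * e i).
Proof.
under eq_bigr do rewrite exprZn -exprM.
by rewrite scaler_prod prodrXr.
Qed.

Lemma bell_partial_coef (z : nat -> C) n k : (k <= n)%N ->
  k`!%:R * bell_partial n k (fun i => i`!%:R * z i)
  = n`!%:R * (gen_poly z n ^+ k)`_n.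
Proof.
move=> kn; have kn1 : (k < n.+1)%N by [].
rewrite (multinomial n (fun i => z i.+1 *: 'X^(i.+1)) kn1) coefZ coef_sum.
rewrite /bell_partial big_mkcondr !mulr_sumr; apply: eq_bigr => j _.
rewrite coefZ prod_expr_scale_monomial coefZ coefXn [n == _]eq_sym.
case: eqP => _; rewrite ?mulr0 //.
have -> : \prod_(i < n) ((i.+1)`!%:R * z i.+1 / (i.+1)`!%:R) ^+ j i
          = \prod_(i < n) z i.+1 ^+ j i.
  by apply: eq_bigr => i _; rewrite mulrC mulKf ?natr_fact_neq0.
by rewrite /=; ring.
Qed.

Lemma dvdp_XnP (R : fieldType) N (p : {poly R}) :
  reflect (forall m, (m < N)%N -> p`_m = 0) ('X^N %| p).
Proof.
apply: (iffP idP) => [/dvdpP [q ->] m mN | p0]; first by rewrite coefMXn mN.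
rewrite -(poly_take_drop N p); suff -> : take_poly N p = 0 by rewrite add0r dvdp_mull.
by apply/polyP => i; rewrite coef_take_poly coef0; case: ifP => // /p0.
Qed.

Lemma dvdXn_coef_eq (R : fieldType) N (p q : {poly R}) m :
  'X^N %| p - q -> (m < N)%N -> p`_m = q`_m.
Proof. by move=> /dvdp_XnP pq mN; apply/eqP; rewrite -subr_eq0 -coefB pq. Qed.

Lemma coef_gen_poly (R : nzRingType) (z : nat -> R) n m :
  (gen_poly z n)`_m = if (0 < m <= n)%N then z m else 0.
Proof.
rewrite /gen_poly coef_sum.
under eq_bigr do rewrite coefZ coefXn mulr_natr mulrb.
case: m => [|m]; first by rewrite big1.
rewrite -big_mkcond /=; under eq_bigl do rewrite eqSS eq_sym.
exact: (big_ord1_eq _ (fun j => z j.+1)).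
Qed.

Lemma dvdX_gen_poly (R : fieldType) (z : nat -> R) n : 'X %| gen_poly z n.
Proof. by rewrite -['X]expr1; apply/dvdp_XnP => -[|//] _; rewrite coef_gen_poly. Qed.

Lemma coef_gen_polyM (R : nzRingType) (x y : nat -> R) n m : (m <= n)%N ->
  (gen_poly x n * gen_poly y n)`_m = \sum_(1 <= i < m) x i * y (m - i)%N.
Proof.
move=> mn; rewrite coefM.
rewrite -(big_mkord xpredT (fun i => (gen_poly x n)`_i * (gen_poly y n)`_(m - i))).
case: m mn => [|m] mn; first by rewrite big_nat1 coef_gen_poly mul0r big_geq.
rewrite big_nat_recl // big_nat_recr //= subnn !coef_gen_poly mul0r mulr0 add0r addr0.
rewrite big_add1 /=; apply: eq_big_nat => i /andP [_ im].
by rewrite !coef_gen_poly subSS !ifT //; lia.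
Qed.

Section BinomialSeries.

Context {R : fieldType} (P : {poly R}).
Hypothesis XdvdP : 'X %| P.

Lemma dvdXn_fixpoint N D : 'X^N %| D - P * D -> 'X^N %| D.
Proof.
move=> hD; rewrite -[D](subrK (P ^+ N * D)) -[X in X - _]mul1r -mulrBl.
rewrite -(expr1n _ N) subrXX mulrAC mulrBl mul1r.
by apply: dvdp_add; [apply: dvdp_mulr | apply/dvdp_mulr/dvdp_exp2r].
Qed.

Lemma dvdXn_fixpoint_uniq N A A' B :
  'X^N %| A - (B + P * A) -> 'X^N %| A' - (B + P * A') -> 'X^N %| A - A'.
Proof.
move=> hA hA'; apply: dvdXn_fixpoint.
have -> : A - A' - P * (A - A') = (A - (B + P * A)) - (A' - (B + P * A')) by ring.
exact: dvdp_sub.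
Qed.

Definition binomial_series N k := \sum_(i < N) 'C(i, k)%:R * P ^+ i.+1.

Lemma sum_exprS_recl N (c : nat -> nat) :
  (c 0%N)%:R * P + P * \sum_(i < N) (c i.+1)%:R * P ^+ i.+1
  = \sum_(i < N.+1) (c i)%:R * P ^+ i.+1.
Proof.
rewrite big_ord_recl expr1 mulr_sumr; congr (_ + _).
by apply: eq_bigr => i _; rewrite lift0 [in RHS]exprS mulrCA.
Qed.

Lemma binomial_series0 N :
  'X^(N.+1) %| binomial_series N 0 - (P + P * binomial_series N 0).
Proof.
rewrite /binomial_series; under eq_bigr do rewrite bin0.
have := sum_exprS_recl N (fun=> 1%N); rewrite big_ord_recr /= mul1r => ->.
by rewrite opprD addrA subrr sub0r dvdpNr mul1r dvdp_exp2r.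
Qed.

Lemma binomial_seriesS N k :
  'X^(N.+1) %| binomial_series N k.+1
               - (P * binomial_series N k + P * binomial_series N k.+1).
Proof.
have := sum_exprS_recl N (fun i => 'C(i, k.+1)).
rewrite big_ord_recr /= bin0n mul0r add0r => shift.
rewrite -mulrDr {3}/binomial_series -big_split /=.
under eq_bigr do rewrite -mulrDl -natrD addnC -binS.
by rewrite shift opprD addrA subrr sub0r dvdpNr dvdp_mull ?dvdp_exp2r.
Qed.

Lemma dvdXn_exprS_binomial_series N Y k :
  'X^(N.+1) %| Y - (P + P * Y) -> 'X^(N.+1) %| Y ^+ k.+1 - binomial_series N k.
Proof.
move=> hY; elim: k => [|k IH].
  by rewrite expr1; apply: dvdXn_fixpoint_uniq hY (binomial_series0 N).
apply: (@dvdXn_fixpoint_uniq _ _ _ (P * Y ^+ k.+1)).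
  have -> : Y ^+ k.+2 - (P * Y ^+ k.+1 + P * Y ^+ k.+2)
            = Y ^+ k.+1 * (Y - (P + P * Y)) by rewrite !exprS; ring.
  exact: dvdp_mull.
have -> : binomial_series N k.+1 - (P * Y ^+ k.+1 + P * binomial_series N k.+1)
  = (binomial_series N k.+1 - (P * binomial_series N k + P * binomial_series N k.+1))
    - P * (Y ^+ k.+1 - binomial_series N k) by ring.
by rewrite dvdp_sub ?binomial_seriesS ?dvdp_mull.
Qed.

Lemma binomial_series_nat N k :
  binomial_series N k = \sum_(k.+1 <= i < N.+1) 'C(i.-1, k)%:R * P ^+ i.
Proof.
rewrite (big_nat_widenl _ 0) // big_mkcondr big_nat_recl // big_mkord /= add0r.
by apply: eq_bigr => i _; rewrite ltnS; case: leqP => // ik; rewrite bin_small ?mul0r.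
Qed.

End BinomialSeries.

Lemma gen_poly_invert_transform (x y : nat -> C) n : invert_transform x y ->
  'X^(n.+1) %| gen_poly y n - (gen_poly x n + gen_poly x n * gen_poly y n).
Proof.
move=> hy; apply/dvdp_XnP => m; rewrite ltnS => mn.
rewrite coefB coefD coef_gen_polyM // !coef_gen_poly mn andbT.
case: m mn => [|m] mn /=; first by rewrite big_geq // addr0 subrr.
by rewrite hy // subrr.
Qed.

Theorem mainTheorem7 (x y : nat -> C) (hy : invert_transform x y)
    (n k : nat) (hk : (1 <= k)%N) (hkn : (k <= n)%N) :
  (k`!)%:R * bell_partial n k (fun i => (i`!)%:R * y i)
  = \sum_(k <= i < n.+1)
      ('C(i.-1, k.-1))%:R * (i`!)%:R * bell_partial n i (fun m => (m`!)%:R * x m).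
Proof.
case: k hk hkn => [//|k] _ kn.
have Yk : 'X^(n.+1) %| gen_poly y n ^+ k.+1 - binomial_series (gen_poly x n) n k.
  apply: dvdXn_exprS_binomial_series; first exact: dvdX_gen_poly.
  exact: gen_poly_invert_transform.
rewrite bell_partial_coef // (dvdXn_coef_eq Yk) // binomial_series_nat coef_sum mulr_sumr.
apply: eq_big_nat => i /andP [_ ilt]; rewrite -mulrA bell_partial_coef //.
by rewrite [_%:R * _ ^+ i]mulr_natl coefMn mulrnAr [RHS]mulr_natl.
Qed.
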